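(* Let $\mathcal{M}=(x,p)$ be any mechanism. Suppose that for every agent $k$ we have coefficients $W^k_{i,j}\in[-1,1]$ ($i,j\in[m_k]$) and $\varepsilon'\ge\varepsilon''\ge0$ such that $W^k_{i,i}\ge\max\{W^k_{i,j}-\varepsilon',-\varepsilon''\}$ for all $k,i,j$. For each $k$ let $\hat q^*$ be an optimal solution of $(P^4)$ (built from $W^k$) and $(\hat\lambda^*,\hat\mu^*,\hat\pi^* )$ Lagrange multipliers satisfying its KKT conditions, and let $\lambda^*_{i,j}=\hat\lambda^*_{i,j}$ if $W^k_{i,j}\ge-m(\varepsilon'+2\gamma)-\varepsilon''$ and $\lambda^*_{i,j}=\hat\lambda^*_{i,j}+F_i(W^k_{i,j}+m(\varepsilon'+2\gamma)+\varepsilon'')$ otherwise (so that $(\lambda^*,\hat\mu^*,\hat\pi^* )$ satisfies the KKT conditions of $(P^3)$ at $\hat q^*$). Let $\mathcal{M}'$ be the RRSF mechanism with $q^*=\hat q^*$ and multipliers $(\lambda^*,\mu^*=\hat\mu^*,\pi^*=\hat\pi^* )$ for every agent. Then for every agent $k$ and $i\in[m_k]$, $$\hat p_k(t_k^{(i)})=\sum_j\pi^*_jq^*_{i,j}+\phi(\mathbf{q}^*_i)-\phi(\mathbf{0})+\min_\ell\frac{\mu^*_\ell}{F_\ell}\ge-m(\varepsilon'+2\gamma)-\varepsilon''-\gamma,$$ and consequently $\mathrm{Rev}(\mathcal{M}')\ge\mathrm{Rev}(\mathcal{M})-n\big(m(\varepsilon'+2\gamma)+\varepsilon''+\gamma\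big)$.
   Context: Setting: $n$ agents, general outcome set $\mathcal{O}$; agent $k$'s type is drawn independently from $\mathcal{D}_k$ with support $\{t_k^{(1)},\dots,t_k^{(m_k)}\}$ and probabilities $F_i=F_i^k>0$; $m=\max_km_k$; valuations in $[0,1]$. A mechanism $(x,p)$ maps bid profiles to outcome distributions and payments; $\mathrm{Rev}$ is expected total payment when agents report truthfully with $t\sim\mathcal{D}$. With $\gamma>0$, $\phi(\mathbf{q})=\frac12\gamma\|\mathbf{q}\|_2^2$; for agent $k$ (index suppressed): $(P^3)$ maximizes $\sum_iF_i(\sum_jW_{i,j}q_{i,j}-\phi(\mathbf{q}_i))$ s.t. $\sum_jq_{i,j}=1$, $\sum_iF_iq_{i,j}=F_j$, $q_{i,j}\ge0$; $(P^4)$ is the same with $W_{i,j}$ replaced by $\hat W_{i,j}=\max\{W_{i,j},-m(\varepsilon'+2\gamma)-\varepsilon''\}$. KKT conditions for coefficients $V$ at $q$ with multipliers $(\lambda,\mu,\pi)$: $F_i(V_{i,j}-\partial\phi(\mathbf{q}_i)/\partial q_{i,j})=\lambda_{i,j}+\mu_i+F_i\pi_j$, $\lambda_{i,j}\le0$, $\lambda_{i,j}q_{i,j}=0$. RRSF mechanism with parameters $(q^*,\mu^*,\pi^* )$ per agent: agent $k$ reporting $t_k^{(i)}$ is represented by a surrogate $s_k$ with $\Pr[s_k=t_k^{(j)}]=q^*_{i,j}$; $\mathcal{M}$ is run on $s=(s_1,\dots,s_n)$, the outcome is $o\sim x(s)$, and agent $k$ pays $p_k(s)+\hat p_k(t_k^{(i)})$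 with $\hat p_k$ as displayed in the claim. *)

From mathcomp Require Import all_boot all_order all_algebra.
Set Implicit Arguments. Unset Strict Implicit. Unset Printing Implicit Defensive.
Import Order.TTheory GRing.Theory Num.Theory.
Local Open Scope ring_scope.

Section Defs.
Variable R : realFieldType.

Definition phi (m : nat) (gamma : R) (v : 'I_m -> R) : R :=
  gamma / 2 * \sum_(j < m) v j ^+ 2.

Definition feasible (m : nat) (F : 'I_m -> R) (q : 'I_m -> 'I_m -> R) : Prop :=
  [/\ forall i, \sum_(j < m) q i j = 1,
      forall j, \sum_(i < m) F i * q i j = F j
    & forall i j, 0 <= q i j].

Definition objective (m : nat) (gamma : R) (F : 'I_m -> R)
    (V : 'I_m -> 'I_m -> R) (q : 'I_m -> 'I_m -> R) : R :=
  \sum_(i < m) F i * (\sum_(j < m) V i j * q i j - phi gamma (q i)).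

Definition optimal (m : nat) (gamma : R) (F : 'I_m -> R)
    (V : 'I_m -> 'I_m -> R) (q : 'I_m -> 'I_m -> R) : Prop :=
  feasible F q /\
  forall q', feasible F q' -> objective gamma F V q' <= objective gamma F V q.

Definition What (m : nat) (W : 'I_m -> 'I_m -> R) (c : R) : 'I_m -> 'I_m -> R :=
  fun i j => Num.max (W i j) c.

(* KKT conditions for coefficients V at q with multipliers (lam, mu, pi);
   d phi(q_i) / d q_{i,j} = gamma * q_{i,j}. *)
Definition KKT (m : nat) (gamma : R) (F : 'I_m -> R) (V : 'I_m -> 'I_m -> R)
    (q : 'I_m -> 'I_m -> R) (lam : 'I_m -> 'I_m -> R) (mu pi : 'I_m -> R) : Prop :=
  forall i j,
    [/\ F i * (V i j - gamma * q i j) = lam i j + mu i + F i * pi j,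
        lam i j <= 0
      & lam i j * q i j = 0].

(* minimum over l of f l (the seed i0 only witnesses nonemptiness) *)
Definition minI (m : nat) (f : 'I_m -> R) (i0 : 'I_m) : R :=
  \big[Num.min/f i0]_(l < m) f l.

Definition phat (m : nat) (gamma : R) (F : 'I_m -> R) (q : 'I_m -> 'I_m -> R)
    (mu pi : 'I_m -> R) (i : 'I_m) : R :=
  \sum_(j < m) pi j * q i j + phi gamma (q i) - phi gamma (fun _ : 'I_m => 0)
  + minI (fun l => mu l / F l) i.

(* type profiles: agent k reports (the index of) a type in 'I_(mk k) *)
Definition profile (n : nat) (mk : 'I_n -> nat) : finType :=
  {dffun forall k : 'I_n, 'I_(mk k)}.

(* a mechanism: outcome distribution (finitely supported, as a list of
   (outcome, weight) pairs) and payments, on each bid profile *)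
Record mechanism (n : nat) (mk : 'I_n -> nat) (O : Type) := Mechanism {
  mx : profile mk -> seq (O * R);
  mp : 'I_n -> profile mk -> R }.

Definition profile_prob (n : nat) (mk : 'I_n -> nat)
    (F : forall k : 'I_n, 'I_(mk k) -> R) (t : profile mk) : R :=
  \prod_(k < n) F k (t k).

Definition Rev (n : nat) (mk : 'I_n -> nat) (O : Type)
    (F : forall k : 'I_n, 'I_(mk k) -> R) (M : mechanism mk O) : R :=
  \sum_(t : profile mk) profile_prob F t * \sum_(k < n) mp M k t.

(* probability that the surrogate profile is s when the bid profile is b *)
Definition surrogate_prob (n : nat) (mk : 'I_n -> nat)
    (q : forall k : 'I_n, 'I_(mk k) -> 'I_(mk k) -> R)
    (b s : profile mk) : R :=
  \prod_(k < n) q k (b k) (s k).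

(* RRSF mechanism built on M with parameters (q, mu, pi) per agent.
   Outcome: mixture over surrogate profiles s of x(s).
   Payment: expected payment E_s[p_k(s)] + hat p_k(b_k). *)
Definition RRSF (n : nat) (mk : 'I_n -> nat) (O : Type) (gamma : R)
    (F : forall k : 'I_n, 'I_(mk k) -> R) (M : mechanism mk O)
    (q : forall k : 'I_n, 'I_(mk k) -> 'I_(mk k) -> R)
    (mu pi : forall k : 'I_n, 'I_(mk k) -> R) : mechanism mk O :=
  Mechanism
    (fun b => flatten [seq [seq (ow.1, surrogate_prob q b s * ow.2) | ow <- mx M s]
                      | s <- enum (profile mk)])
    (fun k b => \sum_(s : profile mk) surrogate_prob q b s * mp M k s
                + phat gamma (F k) (q k) (mu k) (pi k) (b k)).

End Defs.
Arguments mechanism : clear implicits.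
Arguments mechanism R [n] mk O.

From mathcomp Require Import all_boot all_order all_algebra.
From mathcomp Require Import lra.
Import Order.TTheory GRing.Theory Num.Theory.
Local Open Scope ring_scope.

(* Stationarity in the KKT conditions of (P^4), together with
   [lam <= 0] and [What >= c], gives [c - gamma * q l j <= pi j + mu l / F l]
   for all [l, j].  Averaging over the row [q i], a probability vector with
   entries at most 1, yields [sum_j pi j * q i j + mu l / F l >= c - gamma]
   for every [l], hence also for the minimum over [l]; since
   [phi (q i) >= 0 = phi 0] this bounds [phat].  For the revenue, the column
   constraints [sum_i F i * q i j = F j] say that the surrogate profile of a
   truthful bidder is again distributed according to [D], so the expected
   payments of [M] are unchanged and each of the [n] agents adds at least
   [c - gamma]. *)

Lemma sum_dffun_prod (R : comNzRingType) (I : finType) (T_ : I -> finType)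
    (G : forall i, T_ i -> R) :
  \sum_(t : {dffun forall i, T_ i}) \prod_i G i (t i) =
  \prod_i \sum_(x : T_ i) G i x.
Proof.
rewrite (reindex (@dffun_of_fprod I T_)); last first.
  by apply: onW_bij; exact: dffun_of_fprod_bij.
pose P_ := fun i => [ffun x => G i x].
transitivity (\sum_(u : fprod T_) \prod_(i in I) P_ i (u i)).
  by apply: eq_bigr => u _; apply: eq_bigr => i _; rewrite !ffunE.
rewrite big_fprod; symmetry.
transitivity (\prod_i \sum_(j in tagged_with T_ i) untag 0 (P_ i) j).
  apply: eq_bigr => i _; rewrite -(big_tag (fun i x => P_ i x)).
  by apply: eq_bigr => x _; rewrite ffunE.
by rewrite bigA_distr_big_dep; apply: eq_bigl.
Qed.

Section SingleAgent.
Variables (R : realFieldType) (m : nat) (gamma : R) (F : 'I_m -> R).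

Lemma phi0 : phi gamma (fun _ : 'I_m => 0) = 0.
Proof. by rewrite /phi big1 ?mulr0 // => j _; rewrite expr0n. Qed.

Lemma phi_ge0 (v : 'I_m -> R) : 0 <= gamma -> 0 <= phi gamma v.
Proof.
move=> gamma_ge0; rewrite /phi mulr_ge0 ?divr_ge0 //.
by apply: sumr_ge0 => j _; exact: sqr_ge0.
Qed.

Lemma feasible_le1 (q : 'I_m -> 'I_m -> R) i j : feasible F q -> q i j <= 1.
Proof.
case=> rowq _ q_ge0; rewrite -(rowq i) (bigD1 j) //= lerDl.
by apply: sumr_ge0 => l _; exact: q_ge0.
Qed.

Variables (V q lam : 'I_m -> 'I_m -> R) (mu pi : 'I_m -> R) (c : R).
Hypotheses (F_gt0 : forall i, 0 < F i) (gamma_ge0 : 0 <= gamma).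
Hypotheses (V_ge : forall i j, c <= V i j) (q_feas : feasible F q).
Hypothesis q_KKT : KKT gamma F V q lam mu pi.

Lemma KKT_dual_ge l j : c - gamma <= pi j + mu l / F l.
Proof.
have [stat lam_le0 _] := q_KKT l j.
have stat_le : F l * (V l j - gamma * q l j) <= F l * (pi j + mu l / F l).
  by rewrite stat (mulrDr (F l) (pi j)) mulrCA divff ?gt_eqF // mulr1 addrC lerD2l gerDr.
apply: le_trans (_ : V l j - gamma * q l j <= _); last first.
  by rewrite -(ler_pM2l (F_gt0 l)).
apply: lerD => //; rewrite lerN2 ler_piMr //.
exact: feasible_le1.
Qed.

Lemma phat_ge i : c - gamma <= phat gamma F q mu pi i.
Proof.
have [rowq _ q_ge0] := q_feas.
set S := \sum_(j < m) pi j * q i j.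
have avg_ge l : c - gamma <= S + mu l / F l.
  have -> : S + mu l / F l = \sum_(j < m) q i j * (pi j + mu l / F l).
    rewrite -[X in S + X]mul1r -(rowq i) mulr_suml -big_split /=.
    by apply: eq_bigr => j _; rewrite mulrDr [q i j * pi j]mulrC.
  rewrite -[c - gamma]mul1r -(rowq i) mulr_suml.
  by apply: ler_sum => j _; rewrite ler_wpM2l ?KKT_dual_ge.
have min_ge : c - gamma - S <= minI (fun l => mu l / F l) i.
  by apply: le_bigmin => [|l _]; rewrite lerBlDr [_ + S]addrC avg_ge.
have := phi_ge0 (q i) gamma_ge0.
rewrite /phat -/S phi0; lra.
Qed.

End SingleAgent.

Section Revenue.
Variables (R : realFieldType) (n : nat) (mk : 'I_n -> nat) (O : Type).
Variables (F : forall k : 'I_n, 'I_(mk k) -> R) (gamma : R).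
Variables (M : mechanism R mk O) (q : forall k : 'I_n, 'I_(mk k) -> 'I_(mk k) -> R).
Variables (mu pi : forall k : 'I_n, 'I_(mk k) -> R).
Hypothesis F_sum1 : forall k, \sum_(i < mk k) F k i = 1.
Hypothesis q_marginal : forall k j, \sum_(i < mk k) F k i * q k i j = F k j.

Lemma sum_profile_prob : \sum_(t : profile mk) profile_prob F t = 1.
Proof.
by rewrite /profile_prob sum_dffun_prod; apply: big1 => k _; exact: F_sum1.
Qed.

Lemma sum_profile_prob_surrogate (s : profile mk) :
  \sum_(t : profile mk) profile_prob F t * surrogate_prob q t s
  = profile_prob F s.
Proof.
rewrite /profile_prob /surrogate_prob.
under eq_bigr => t _ do rewrite -big_split /=.
rewrite (@sum_dffun_prod R _ _ (fun k (x : 'I_(mk k)) => F k x * q k x (s k))).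
by apply: eq_bigr => k _; exact: q_marginal.
Qed.

Lemma Rev_RRSF :
  Rev F (RRSF gamma F M q mu pi) = Rev F M +
  \sum_(t : profile mk) profile_prob F t *
    \sum_(k < n) phat gamma (F k) (q k) (mu k) (pi k) (t k).
Proof.
rewrite /Rev /=.
under eq_bigr => t _ do rewrite big_split /= mulrDr.
rewrite big_split /=; congr (_ + _).
under eq_bigr => t _ do rewrite exchange_big mulr_sumr.
rewrite exchange_big; apply: eq_bigr => s _.
rewrite -sum_profile_prob_surrogate mulr_suml; apply: eq_bigr => t _.
by rewrite -mulrA -mulr_sumr.
Qed.

Lemma Rev_RRSF_ge (b : R) :
  (forall k i, 0 <= F k i) ->
  (forall k i, b <= phat gamma (F k) (q k) (mu k) (pi k) i) ->
  Rev F M + n%:R * b <= Rev F (RRSF gamma F M q mu pi).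
Proof.
move=> F_ge0 phat_geb; rewrite Rev_RRSF lerD2l.
have -> : n%:R * b = \sum_(t : profile mk) profile_prob F t * \sum_(k < n) b.
  by rewrite -mulr_suml sum_profile_prob mul1r sumr_const card_ord mulr_natl.
apply: ler_sum => t _; rewrite ler_wpM2l ?prodr_ge0 //.
by apply: ler_sum => k _; exact: phat_geb.
Qed.

End Revenue.

Theorem mainTheorem13 (R : realFieldType) (n : nat) (mk : 'I_n -> nat)
    (O : Type)
    (F : forall k : 'I_n, 'I_(mk k) -> R)
    (HFpos : forall k i, 0 < F k i)
    (HFsum : forall k, \sum_(i < mk k) F k i = 1)
    (gamma : R) (Hgamma : 0 < gamma)
    (M : mechanism R mk O)
    (W : forall k : 'I_n, 'I_(mk k) -> 'I_(mk k) -> R)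
    (HW : forall k i j, -1 <= W k i j <= 1)
    (eps1 eps2 : R) (Heps : 0 <= eps2 <= eps1)
    (Hdiag : forall k i j, Num.max (W k i j - eps1) (- eps2) <= W k i i)
    (qh : forall k : 'I_n, 'I_(mk k) -> 'I_(mk k) -> R)
    (lamh : forall k : 'I_n, 'I_(mk k) -> 'I_(mk k) -> R)
    (muh pih : forall k : 'I_n, 'I_(mk k) -> R) :
  let m := \max_(k < n) mk k in
  let c := - (m%:R * (eps1 + 2 * gamma)) - eps2 in
  (forall k, optimal gamma (F k) (What (W k) c) (qh k)) ->
  (forall k, KKT gamma (F k) (What (W k) c) (qh k) (lamh k) (muh k) (pih k)) ->
  (forall k i, phat gamma (F k) (qh k) (muh k) (pih k) i >= c - gamma)
  /\ Rev F (RRSF gamma F M qh muh pih) >= Rev F M + n%:R * (c - gamma).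
Proof.
move=> m c qh_opt qh_KKT.
have What_ge k i j : c <= What (W k) c i j by rewrite /What le_max lexx orbT.
have phat_bound k i : c - gamma <= phat gamma (F k) (qh k) (muh k) (pih k) i.
  apply: phat_ge => //; [exact: ltW | exact: (qh_opt k).1].
split => //; apply: Rev_RRSF_ge => // [k j|k i].
- by have [_ -> _] := (qh_opt k).1.
- exact: ltW.
Qed.
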